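(* Let $q\ge2$ and let $U$ be a $q\times q$ row-stochastic matrix with strictly positive entries. There is a constant $C_4$ independent of $n$ such that for all sufficiently large $n$ the following holds. Let $k\ge1$, let $\mathbf{t}_1,\mathbf{t}_1',\dots,\mathbf{t}_k,\mathbf{t}_k'\in\mathcal{N}_{q,n}$, let $p_1,\dots,p_k\ge0$, and let $Q_1,Q_2$ be distributions on $\mathcal{N}_{q,n}$ with $$Q_2(\mathbf{t})=Q_1(\mathbf{t})+\sum_{i=1}^kp_i\big(\mathbb{1}\{\mathbf{t}=\mathbf{t}_i'\}-\mathbb{1}\{\mathbf{t}=\mathbf{t}_i\}\big)\quad\forall\mathbf{t}\in\mathcal{N}_{q,n}.$$ If $Q_{\mathrm{op},1},Q_{\mathrm{op},2}$ are the output distributions of $q$-NCC$_{n,U}$ for inputs $Q_1,Q_2$, then $$d_{\mathrm{TV}}(Q_{\mathrm{op},1},Q_{\mathrm{op},2})\le\frac{C_4(\log n)^{(q-2)/2}}{\sqrt n}\sum_{i=1}^kp_i\,d_{\mathrm c}(\mathbf{t}_i,\mathbf{t}_i').$$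
   Context: $\mathcal{N}_{q,n}=\{\mathbf{t}\in\mathbb{Z}_{\ge0}^q:\sum_it_i=n\}$ is the set of compositions of vectors in $[1:q]^n$ (composition of $\mathbf{x}$: $(N(1|\mathbf{x}),\dots,N(q|\mathbf{x}))$, $N(c|\mathbf{x})=|\{i:x_i=c\}|$). The $q$-ary noisy composition channel $q$-NCC$_{n,U}$ has input/output alphabet $\mathcal{N}_{q,n}$ and $P_{q\text{-NC}}(\mathbf{w}|\mathbf{t})=\sum_{\mathbf{z}\text{ of composition }\mathbf{w}}\prod_iU(z_i|x_i)$ for any $\mathbf{x}$ of composition $\mathbf{t}$; the output distribution for input distribution $Q$ is $\sum_{\mathbf{t}}Q(\mathbf{t})P_{q\text{-NC}}(\cdot|\mathbf{t})$. $d_{\mathrm c}(\mathbf{t},\mathbf{t}')=\frac12\sum_i|t_i-t_i'|$. $d_{\mathrm{TV}}(P,Q)=\frac12\sum|P-Q|$. Logarithms base 2. *)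

From HB Require Import structures.
From mathcomp Require Import all_boot all_order all_algebra.
From mathcomp Require Import all_classical all_reals all_analysis.
Set Implicit Arguments. Unset Strict Implicit. Unset Printing Implicit Defensive.
Import Order.TTheory GRing.Theory Num.Theory.
Local Open Scope ring_scope.

(* The alphabet [1:q] is 'I_q; vectors in [1:q]^n are {ffun 'I_n -> 'I_q}. *)

Definition Ncount (q n : nat) (c : 'I_q) (x : {ffun 'I_n -> 'I_q}) : nat :=
  #|[set i | x i == c]|.

(* N_{q,n}: compositions t in Z_{>=0}^q with sum n (entries are <= n). *)
Definition Ncomp (q n : nat) : predArgType :=
  {t : {ffun 'I_q -> 'I_n.+1} | (\sum_(i < q) (t i : nat))%N == n}.

Definition compv (q n : nat) (t : Ncomp q n) (c : 'I_q) : nat := (sval t) c.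

Definition has_comp (q n : nat) (x : {ffun 'I_n -> 'I_q}) (t : Ncomp q n) : bool :=
  [forall c, Ncount c x == compv t c].

(* some (any) x of composition t (always exists; value irrelevant by symmetry) *)
Definition rep_of (q n : nat) (t : Ncomp q n) : option {ffun 'I_n -> 'I_q} :=
  [pick x | has_comp x t].

(* P_{q-NC}(w|t) = sum_{z of composition w} prod_i U(z_i|x_i), U(b|a) = U a b *)
Definition PNC (R : realType) (q n : nat) (U : 'M[R]_q) (w t : Ncomp q n) : R :=
  match rep_of t with
  | Some x => \sum_(z : {ffun 'I_n -> 'I_q} | has_comp z w) \prod_(i < n) U (x i) (z i)
  | None => 0
  end.

Definition out_dist (R : realType) (q n : nat) (U : 'M[R]_q)
    (Q : Ncomp q n -> R) (w : Ncomp q n) : R :=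
  \sum_(t : Ncomp q n) Q t * PNC U w t.

Definition is_dist (R : realType) (q n : nat) (Q : Ncomp q n -> R) : Prop :=
  (forall t, 0 <= Q t) /\ \sum_(t : Ncomp q n) Q t = 1.

Definition dTV (R : realType) (T : finType) (P Q : T -> R) : R :=
  2^-1 * \sum_(x : T) `|P x - Q x|.

Definition dc {R : realType} (q n : nat) (t t' : Ncomp q n) : R :=
  2^-1 * \sum_(c < q) `|(compv t c)%:R - (compv t' c)%:R : R|.

Definition row_stochastic_pos (R : realType) (q : nat) (U : 'M[R]_q) : Prop :=
  (forall a b, 0 < U a b) /\ (forall a, \sum_(b < q) U a b = 1).

Definition log2 (R : realType) (x : R) : R := ln x / ln 2.

(* Changing one input symbol from [a] to [b] moves the law of the output
   composition by [O(1/sqrt n)] in L1.  Conditioning on the output at the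
   changed position, both laws are mixtures, with weights [U a c] and [U b c],
   of the laws of [S + e_c], where [S] is the composition of the other outputs;
   so it suffices to compare [S + e_c] with [S + e_c'].  Relabel the position by
   a symbol occurring at least [n/q] times: the outputs on its class are
   exchangeable, so [P(S + e_c = w)] is the expectation, on the event that the
   output composition is [w], of the number of [c]'s in the class divided by its
   mean, and a variance computation shows that this ratio is [1 + O(1/sqrt n)]
   in mean.  Inputs of compositions [t] and [t'] are joined by [d_c(t, t')]
   single substitutions, and [Q1], [Q2] differ by the moves [t_i -> t_i'] of
   mass [p_i].  This gives the bound with [C4 = 2 (1 + q / min U)] even without
   the factor [(log n)^((q-2)/2)], which is at least 1 for [n >= 2]. *)

From HB Require Import structures.
From mathcomp Require Import all_boot all_order all_algebra fingroup perm.
From mathcomp Require Import all_classical all_reals all_analysis.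
From mathcomp Require Import ring lra zify.
Import Order.TTheory GRing.Theory Num.Theory.
Set Implicit Arguments. Unset Strict Implicit. Unset Printing Implicit Defensive.

Section Compositions.
Variables q n : nat.
Implicit Types (x z : {ffun 'I_n -> 'I_q}) (w : Ncomp q n).

Lemma NcountE c x : Ncount c x = count_mem c (map x (enum 'I_n)).
Proof.
rewrite /Ncount count_map cardE /enum_mem size_filter filter_predT.
by apply: eq_count => i; rewrite /= inE.
Qed.

Lemma sum_Ncount x : \sum_(c < q) Ncount c x = n.
Proof.
rewrite -[RHS]card_ord -sum1_card (partition_big x predT) //=.
by apply: eq_bigr => c _; rewrite /Ncount -sum1_card; apply: eq_bigl => i; rewrite inE.
Qed.

Lemma has_comp_inj x w w' : has_comp x w -> has_comp x w' -> w = w'.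
Proof.
move=> /forallP xw /forallP xw'; apply/val_inj/ffunP => c; apply: val_inj.
by rewrite /= -[val _]/(compv w c) -(eqP (xw c)) (eqP (xw' c)).
Qed.

Lemma has_comp_exists (c0 : 'I_q) w : exists x, has_comp x w.
Proof.
pose s := flatten [seq nseq (compv w c) c | c <- enum 'I_q].
have count_s c : count_mem c s = compv w c.
  rewrite count_flatten -map_comp sumnE big_map big_enum /= (bigD1 c) //=.
  rewrite count_nseq /= eqxx mul1n big1 ?addn0 // => c' c'c.
  by rewrite count_nseq /= (negbTE c'c).
have size_s : size s = n.
  rewrite size_flatten /shape -map_comp sumnE big_map big_enum /= -[RHS](eqP (svalP w)).
  by apply: eq_bigr => c _; rewrite /= size_nseq.
pose x := [ffun i : 'I_n => nth c0 s i].
have x_s : map x (enum 'I_n) = s.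
  rewrite -[RHS](take_size s) -(map_nth_iota0 c0) size_s // -val_enum_ord -map_comp.
  by apply: eq_map => i; rewrite /= ffunE.
by exists x; apply/forallP => c; rewrite NcountE x_s count_s.
Qed.

Definition permute (s : 'S_n) x := [ffun i => x (s i)].

Lemma permute_inj s : injective (permute s).
Proof.
move=> x x' /ffunP eq_x; apply/ffunP => i.
by move: (eq_x (s^-1 i)%g); rewrite !ffunE permKV.
Qed.

Lemma Ncount_permute (s : 'S_n) c z : Ncount c (permute s z) = Ncount c z.
Proof.
rewrite /Ncount -(card_preimset [set j | z j == c] (@perm_inj _ s)).
by apply: eq_card => i; rewrite !inE ffunE.
Qed.

Lemma has_comp_permute (s : 'S_n) z w : has_comp (permute s z) w = has_comp z w.
Proof. by apply: eq_forallb => c; rewrite Ncount_permute. Qed.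

Lemma eq_Ncount_permute x x' :
  (forall c, Ncount c x = Ncount c x') -> exists s : 'S_n, x = permute s x'.
Proof.
move=> eq_x.
have : perm_eq (map x (enum 'I_n)) [tuple x' i | i < n].
  by apply/allP => c _ /=; rewrite -!NcountE eq_x.
case/tuple_permP=> s x_s; exists s; apply/ffunP => i; rewrite ffunE.
move: (congr1 (fun r => nth (x i) r i) x_s); rewrite (nth_map i) ?size_enum_ord // nth_ord_enum.
by rewrite -tnth_nth !tnth_mktuple.
Qed.

Definition upd x (j : 'I_n) (b : 'I_q) := [ffun i => if i == j then b else x i].

Lemma upd_at x j b : upd x j b j = b.
Proof. by rewrite ffunE eqxx. Qed.

Lemma upd_other x j b i : i != j -> upd x j b i = x i.
Proof. by rewrite ffunE => /negbTE ->. Qed.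

Lemma Ncount_upd x j b c : Ncount c (upd x j b) + (x j == c) = Ncount c x + (b == c).
Proof.
rewrite /Ncount (cardD1 j) [in RHS](cardD1 j) !inE upd_at.
have -> : #|[predD1 [set i | upd x j b i == c] & j]| = #|[predD1 [set i | x i == c] & j]|.
  by apply: eq_card => i; rewrite !inE ffunE; case: (i == j).
lia.
Qed.

Lemma large_class x j : exists a, n <= q * #|[set i | upd x j a i == upd x j a j]|.
Proof.
have [a _ a_max] := @arg_maxnP _ (x j) predT (fun c => Ncount c x) isT.
exists a; apply: leq_trans (_ : q * Ncount a x <= _).
  rewrite -{1}(sum_Ncount x) -[q in q * _]card_ord -sum_nat_const.
  by apply: leq_sum => c _; apply: a_max.
rewrite leq_mul2l subset_leq_card ?orbT //; apply/fintype.subsetP => i.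
by rewrite !inE upd_at ffunE => /eqP xi; case: (i == j); rewrite ?xi.
Qed.

Definition comp_dist x x' : nat := \sum_(c < q) (Ncount c x - Ncount c x').

Lemma comp_dist_sym x x' : comp_dist x x' = comp_dist x' x.
Proof.
have : comp_dist x x' + \sum_c Ncount c x' = comp_dist x' x + \sum_c Ncount c x.
  by rewrite -!big_split; apply: eq_bigr => c _ /=; lia.
by rewrite !sum_Ncount => /addIn.
Qed.

Lemma comp_dist_eq0 x x' : comp_dist x x' = 0 -> forall c, Ncount c x = Ncount c x'.
Proof.
move=> d0 c; apply/eqP; rewrite eqn_leq -!subn_eq0.
have /andP [] : (comp_dist x x' == 0) && (comp_dist x' x == 0).
  by rewrite [comp_dist x' x]comp_dist_sym d0.
by rewrite !sum_nat_eq0 => /forallP/(_ c) /= -> /forallP/(_ c) /= ->.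
Qed.

Lemma comp_dist_gt0 x x' : 0 < comp_dist x x' -> exists a, Ncount a x' < Ncount a x.
Proof.
rewrite lt0n sum_nat_eq0 => /forallPn [a /=].
by rewrite subn_eq0 -ltnNge; exists a.
Qed.

Lemma comp_dist_upd x x' :
  0 < comp_dist x x' -> exists j b, (comp_dist (upd x j b) x').+1 = comp_dist x x'.
Proof.
move=> dist_gt0; have [a lt_a] := comp_dist_gt0 dist_gt0.
have [b lt_b] : exists b, Ncount b x < Ncount b x'.
  by apply: comp_dist_gt0; rewrite comp_dist_sym.
have [j xj] : exists j, x j = a.
  have : 0 < Ncount a x by lia.
  by rewrite /Ncount card_gt0 => /set0Pn [j]; rewrite inE => /eqP; exists j.
exists j, b; rewrite -addn1.
have -> : 1 = \sum_(c < q) (a == c : nat).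
  by rewrite (bigD1 a) //= eqxx big1 // => c; rewrite eq_sym => /negbTE ->.
rewrite -big_split; apply: eq_bigr => c _ /=.
have := Ncount_upd x j b c; rewrite xj.
have ba : b != a by apply: contraTneq lt_b => ->; rewrite -leqNgt ltnW.
case: (eqVneq a c) => [<-|ac]; first by rewrite (negbTE ba); lia.
by case: (eqVneq b c) => [<-|bc] /=; lia.
Qed.

End Compositions.

Local Open Scope ring_scope.

Lemma normr_natB (R : numDomainType) (a b : nat) :
  `|a%:R - b%:R : R| = ((a - b)%N + (b - a)%N)%:R.
Proof.
case: (leqP a b) => [le_ab | /ltnW le_ba].
  by rewrite (eqnP le_ab) add0n natrB // distrC ger0_norm // subr_ge0 ler_nat.
by rewrite (eqnP le_ba) addn0 natrB // ger0_norm // subr_ge0 ler_nat.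
Qed.

Lemma sum_indicator_mul (R : pzSemiRingType) (T : finType) (a : T) (F : T -> R) :
  \sum_s ((a == s)%:R : R) * F s = F a.
Proof.
rewrite (bigD1 a) //= eqxx mul1r big1 ?addr0 // => s /negbTE.
by rewrite eq_sym => ->; rewrite mul0r.
Qed.

Lemma mean_abs_le (R : realFieldType) (T : finType) (m X : T -> R) (eps : R) :
  (forall t, 0 <= m t) -> \sum_t m t = 1 -> 0 < eps ->
  \sum_t m t * X t ^+ 2 <= eps ^+ 2 -> \sum_t m t * `|X t| <= eps.
Proof.
move=> m_ge0 m_sum1 eps_gt0 m2_le.
have eps2_gt0 : 0 < 2 * eps by rewrite mulr_gt0.
rewrite -(ler_pM2r eps2_gt0) (_ : eps * (2 * eps) = eps ^+ 2 + eps ^+ 2); last by ring.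
(* AM-GM: [2 eps |X| <= eps^2 + X^2]. *)
apply: le_trans (_ : \sum_t m t * (eps ^+ 2 + X t ^+ 2) <= _).
  rewrite mulr_suml; apply: ler_sum => t _; rewrite -mulrA ler_wpM2l //.
  have : 0 <= (`|X t| - eps) ^+ 2 by rewrite sqr_ge0.
  by rewrite -(real_normK (num_real (X t))); move: `|X t| => u; nra.
under eq_bigr do rewrite mulrDr.
by rewrite big_split /= -mulr_suml m_sum1 mul1r lerD2l.
Qed.

Lemma log2_powR_ge1 (R : realType) (n : nat) (e : R) :
  (2 <= n)%N -> 0 <= e -> 1 <= log2 (n%:R : R) `^ e.
Proof.
move=> n_ge2 e_ge0.
have log_ge1 : 1 <= log2 (n%:R : R).
  rewrite /log2 ler_pdivlMr ?ln_gt0 ?ltr1n // mul1r.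
  by rewrite ler_ln ?posrE; rewrite ?ler_nat ?ltr0n // (leq_trans _ n_ge2).
by rewrite -[leLHS](powRr0 (log2 (n%:R : R))); apply: ler_powR.
Qed.

Lemma matrix_entry_lb (R : realFieldType) m m' (A : 'M[R]_(m, m')) :
  (forall i j, 0 < A i j) -> exists2 d, 0 < d & forall i j, d <= A i j.
Proof.
move=> A_gt0; exists (\big[Order.min/1]_(ij : 'I_m * 'I_m') A ij.1 ij.2).
  by apply: lt_bigmin => // ij _; apply: A_gt0.
by move=> i j; apply: (bigmin_le _ (i, j)).
Qed.

Section ProductChannel.
Variables (R : comPzRingType) (q n : nat) (U : 'M[R]_q).
Implicit Types (x z : {ffun 'I_n -> 'I_q}) (w : Ncomp q n).

Definition chanW x z : R := \prod_i U (x i) (z i).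

Definition out_comp x w : R := \sum_(z | has_comp z w) chanW x z.

Definition out_comp_at x j c w : R := \sum_(z | has_comp z w && (z j == c)) chanW x z.

(* The law of the composition of the outputs off [j], shifted by the symbol [c]. *)
Definition rest_comp x j c w : R :=
  \sum_(z | has_comp z w && (z j == c)) \prod_(i | i != j) U (x i) (z i).

Definition hits (B : {set 'I_n}) z c : R := \sum_(j in B) (z j == c)%:R.

Lemma chanW_permute s x z : chanW (permute s x) (permute s z) = chanW x z.
Proof.
by rewrite /chanW [RHS](reindex_inj (@perm_inj _ s)); apply: eq_bigr => i _; rewrite !ffunE.
Qed.

Lemma out_comp_permute x x' w :
  (forall c, Ncount c x = Ncount c x') -> out_comp x w = out_comp x' w.
Proof.
case/eq_Ncount_permute=> s ->; rewrite /out_comp (reindex_inj (@permute_inj _ _ s)).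
by apply: eq_big => [z|z _]; rewrite ?has_comp_permute ?chanW_permute.
Qed.

Lemma out_comp_at_tperm x j j' c w : x j = x j' -> out_comp_at x j c w = out_comp_at x j' c w.
Proof.
move=> xj; pose s := tperm j j'.
have xs : permute s x = x.
  by apply/ffunP => i; rewrite ffunE /s; case: tpermP => // ->.
rewrite /out_comp_at (reindex_inj (@permute_inj _ _ s)); apply: eq_big => [z|z _].
  by rewrite has_comp_permute ffunE tpermL.
by rewrite -{1}xs chanW_permute.
Qed.

Lemma out_comp_at_split x x' j c w :
  (forall i, i != j -> x' i = x i) -> out_comp_at x' j c w = U (x' j) c * rest_comp x j c w.
Proof.
move=> x'x; rewrite /rest_comp mulr_sumr; apply: eq_bigr => z /andP [_ /eqP zj].
by rewrite /chanW (bigD1 j) //= zj; congr (_ * _); apply: eq_bigr => i /x'x ->.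
Qed.

Lemma out_comp_split x x' j w :
  (forall i, i != j -> x' i = x i) -> out_comp x' w = \sum_c U (x' j) c * rest_comp x j c w.
Proof.
move=> x'x; rewrite /out_comp (partition_big (fun z => z j) predT) //=.
by apply: eq_bigr => c _; rewrite -(out_comp_at_split c w x'x).
Qed.

Lemma out_comp_at_avg x j c w :
  #|[set i | x i == x j]|%:R * out_comp_at x j c w =
  \sum_(z | has_comp z w) chanW x z * hits [set i | x i == x j] z c.
Proof.
transitivity (\sum_(j' in [set i | x i == x j]) out_comp_at x j' c w).
  rewrite mulr_natl -sumr_const; apply: eq_bigr => j'.
  by rewrite inE => /eqP xj'; rewrite (out_comp_at_tperm c w xj').
rewrite /out_comp_at; under eq_bigr do rewrite big_mkcondr /=.
rewrite exchange_big /=; apply: eq_bigr => z _; rewrite /hits mulr_sumr.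
by apply: eq_bigr => j' _; case: (z j' == c); rewrite ?mulr1 ?mulr0.
Qed.

Lemma sum_chanW_prod x (H : 'I_n -> 'I_q -> R) :
  \sum_z chanW x z * \prod_i H i (z i) = \prod_i \sum_c U (x i) c * H i c.
Proof.
by rewrite bigA_distr_bigA /=; apply: eq_bigr => z _; rewrite /chanW -big_split.
Qed.

Hypothesis U_row : forall a, \sum_b U a b = 1.

Lemma sum_chanW x : \sum_z chanW x z = 1.
Proof.
transitivity (\sum_z chanW x z * \prod_(i < n) (1 : R)).
  by apply: eq_bigr => z _; rewrite big1_eq mulr1.
rewrite (sum_chanW_prod x (fun _ _ => 1)); apply: big1 => i _.
by under eq_bigr do rewrite mulr1.
Qed.

Lemma sum_chanW_at x j (F : 'I_q -> R) :
  \sum_z chanW x z * F (z j) = \sum_c U (x j) c * F c.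
Proof.
pose H i c := if i == j then F c else 1.
have H_j z : \prod_i H i (z i) = F (z j).
  by rewrite (bigD1 j) //= /H eqxx big1 ?mulr1 // => i /negbTE ->.
under eq_bigr do rewrite -H_j.
rewrite sum_chanW_prod (bigD1 j) //= [X in _ * X]big1 ?mulr1.
  by apply: eq_bigr => c _; rewrite /H eqxx.
by move=> i /negbTE ij; rewrite /H ij; under eq_bigr do rewrite mulr1.
Qed.

Lemma sum_chanW_at2 x j j' (F G : 'I_q -> R) : j != j' ->
  \sum_z chanW x z * (F (z j) * G (z j')) =
    (\sum_c U (x j) c * F c) * (\sum_c U (x j') c * G c).
Proof.
move=> jj'; have j'j : (j' == j) = false by rewrite eq_sym (negbTE jj').
pose H i c := if i == j then F c else if i == j' then G c else 1.
have H_jj' z : \prod_i H i (z i) = F (z j) * G (z j').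
  rewrite (bigD1 j) // (bigD1 j') /= ?j'j //= /H eqxx j'j eqxx big1 ?mulr1 //.
  by move=> i /andP [/negbTE -> /negbTE ->].
under eq_bigr do rewrite -H_jj'.
rewrite sum_chanW_prod (bigD1 j) // (bigD1 j') /= ?j'j //= [X in _ * (_ * X)]big1 ?mulr1.
  by congr (_ * _); apply: eq_bigr => c _; rewrite /H ?j'j eqxx.
move=> i /andP [/negbTE ij /negbTE ij'].
by rewrite /H ij ij'; under eq_bigr do rewrite mulr1.
Qed.

Lemma sum_chanW_hits_var x (B : {set 'I_n}) a c : (forall i, i \in B -> x i = a) ->
  \sum_z chanW x z * (hits B z c - #|B|%:R * U a c) ^+ 2 = #|B|%:R * (U a c - U a c ^+ 2).
Proof.
move=> xB; set p := U a c; pose f (e : 'I_q) : R := (e == c)%:R - p.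
have indicator_mean (F : 'I_q -> R) : \sum_e U a e * ((e == c)%:R * F e) = p * F c.
  by rewrite (bigD1 c) //= eqxx mul1r big1 ?addr0 // => e /negbTE ->; rewrite mul0r mulr0.
have mean_f : \sum_e U a e * f e = 0.
  under eq_bigr => e _ do rewrite /f mulrBr -[(e == c)%:R]mulr1.
  by rewrite sumrB indicator_mean -mulr_suml U_row; ring.
have var_f : \sum_e U a e * (f e * f e) = p - p ^+ 2.
  have f2 e : f e * f e = (e == c)%:R * (1 - 2 * p) + p ^+ 2.
    by rewrite /f; case: (e == c) => /=; ring.
  under eq_bigr do rewrite f2 mulrDr.
  by rewrite big_split /= indicator_mean -mulr_suml U_row; ring.
have hits_f z : hits B z c - #|B|%:R * p = \sum_(j in B) f (z j).
  by rewrite /f sumrB sumr_const mulr_natl.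
transitivity (\sum_z \sum_(j in B) \sum_(j' in B) chanW x z * (f (z j) * f (z j'))).
  apply: eq_bigr => z _; rewrite hits_f expr2 mulr_suml mulr_sumr.
  by apply: eq_bigr => j _; rewrite !mulr_sumr.
rewrite exchange_big mulr_natl -sumr_const; apply: eq_bigr => j jB; rewrite exchange_big.
rewrite (bigD1 j) //= [X in _ + X]big1 ?addr0.
  by move: (sum_chanW_at x j (fun e => f e * f e)) => /= ->; rewrite xB.
by move=> j' /andP [j'B j'j]; rewrite sum_chanW_at2 1?eq_sym // !xB // mean_f mul0r.
Qed.

Lemma out_comp_upd_diff x j b w :
  out_comp x w - out_comp (upd x j b) w =
  \sum_c (U (x j) c - U b c) * (rest_comp x j c w - rest_comp x j (x j) w).
Proof.
rewrite (@out_comp_split x x j w) // (@out_comp_split x (upd x j b) j w) ?upd_at;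
  last exact: upd_other.
under [RHS]eq_bigr do rewrite mulrBr.
rewrite [RHS]sumrB -[X in _ = _ - X]mulr_suml sumrB !U_row subrr mul0r subr0 -sumrB.
by apply: eq_bigr => c _; rewrite mulrBl.
Qed.

End ProductChannel.

Arguments hits {R q n}.

Section OneSymbolChange.
Variables (R : realFieldType) (q n : nat) (U : 'M[R]_q).
Hypotheses (U_ge0 : forall a b, 0 <= U a b) (U_row : forall a, \sum_b U a b = 1).
Implicit Types (x z : {ffun 'I_n -> 'I_q}) (w : Ncomp q n).

Lemma chanW_ge0 x z : 0 <= chanW U x z.
Proof. by apply: prodr_ge0 => i _. Qed.

Lemma sum_comps_le (G : {ffun 'I_n -> 'I_q} -> R) :
  (forall z, 0 <= G z) -> \sum_w \sum_(z | has_comp z w) G z <= \sum_z G z.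
Proof.
move=> G_ge0; under eq_bigr do rewrite big_mkcond /=.
rewrite exchange_big /=; apply: ler_sum => z _.
case: (pickP (has_comp z)) => [w0 zw0 | no_comp]; last by rewrite big1 // => w _; rewrite no_comp.
rewrite (bigD1 w0) //= zw0 big1 ?addr0 // => w /negbTE w_w0.
by case: ifP => // zw; move: w_w0; rewrite (has_comp_inj zw zw0) eqxx.
Qed.

(* Exchangeability of the class of [x' j] under [chanW U x'] turns the
   condition [z j = c] into a reweighting by the frequency of [c] on that class. *)
Lemma rest_comp_change_measure x x' j c w :
  (forall i, i != j -> x' i = x i) -> U (x' j) c != 0 ->
  rest_comp U x j c w = \sum_(z | has_comp z w) chanW U x' z *
    (hits [set i | x' i == x' j] z c / (#|[set i | x' i == x' j]|%:R * U (x' j) c)).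
Proof.
move=> x'x Uc_neq0.
have B_gt0 : (0 < #|[set i | x' i == x' j]|)%N.
  by apply/card_gt0P; exists j; rewrite inE.
under eq_bigr do rewrite mulrA.
rewrite -mulr_suml -out_comp_at_avg (out_comp_at_split U c w x'x).
by field; rewrite Uc_neq0 pnatr_eq0 -lt0n B_gt0.
Qed.

Lemma hits_dev_le x (B : {set 'I_n}) a c (eps : R) :
  (forall i, i \in B -> x i = a) -> (0 < #|B|)%N -> 0 < U a c -> 0 < eps ->
  (#|B|%:R * U a c)^-1 <= eps ^+ 2 ->
  \sum_z chanW U x z * `|hits B z c / (#|B|%:R * U a c) - 1| <= eps.
Proof.
move=> xB B_gt0 Uac_gt0 eps_gt0 eps_ge.
apply: mean_abs_le => //; [exact: chanW_ge0 | exact: sum_chanW |].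
set L := #|B|%:R; set p := U a c.
have Lp_gt0 : 0 < L * p by rewrite mulr_gt0 ?ltr0n.
have sqr_dev z : (hits B z c / (L * p) - 1) ^+ 2 = (hits B z c - L * p) ^+ 2 / (L * p) ^+ 2.
  by field; rewrite !lt0r_neq0 // ltr0n.
under eq_bigr do rewrite sqr_dev mulrA.
rewrite -mulr_suml sum_chanW_hits_var //; apply: le_trans eps_ge.
have -> : L * (p - p ^+ 2) / (L * p) ^+ 2 = (1 - p) / (L * p).
  by field; rewrite !lt0r_neq0 // ltr0n.
by rewrite -[leRHS]mul1r ler_pM2r ?invr_gt0 // lerBlDr lerDl ltW.
Qed.

Lemma out_comp_L1_le (K : R) :
  (forall x j b, \sum_w `|out_comp U x w - out_comp U (upd x j b) w| <= K) ->
  forall x x', \sum_w `|out_comp U x w - out_comp U x' w| <= K * (comp_dist x x')%:R.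
Proof.
move=> step x x'; have [m] := ubnP (comp_dist x x'); elim: m x => // m IH x lt_m.
case: (posnP (comp_dist x x')) => [d0 | d_gt0].
  rewrite d0 mulr0 big1 // => w _.
  by rewrite (out_comp_permute U w (comp_dist_eq0 d0)) subrr normr0.
have [j [b d_upd]] := comp_dist_upd d_gt0.
apply: le_trans (_ : \sum_w (`|out_comp U x w - out_comp U (upd x j b) w| +
                             `|out_comp U (upd x j b) w - out_comp U x' w|) <= _).
  by apply: ler_sum => w _; apply: ler_distD.
rewrite big_split /= -d_upd -natr1 mulrDr mulr1 [leRHS]addrC.
by apply: lerD; [apply: step | apply: IH; rewrite -ltnS d_upd].
Qed.

Variables dl eps : R.
Hypotheses (dl_gt0 : 0 < dl) (U_ge_dl : forall a b, dl <= U a b) (eps_gt0 : 0 < eps).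
Hypothesis eps_ge : q%:R / (n%:R * dl) <= eps ^+ 2.

Lemma rest_comp_shift_le x j c c' :
  \sum_w `|rest_comp U x j c w - rest_comp U x j c' w| <= eps + eps.
Proof.
have [a nqL] := large_class x j.
set x' := upd x j a; set B := [set i | x' i == x' j]; set L := #|B|.
have x'x i : i != j -> x' i = x i by apply: upd_other.
have L_gt0 : (0 < L)%N by apply/card_gt0P; exists j; rewrite inE.
have n_gt0 : (0 < n)%N by apply: leq_ltn_trans (ltn_ord j).
have q_gt0 : (0 < q)%N by apply: leq_ltn_trans (ltn_ord a).
have U_gt0 e : 0 < U (x' j) e by apply: lt_le_trans (U_ge_dl _ _).
pose Y e z := hits B z e / (L%:R * U (x' j) e).
have Y_dev e : \sum_z chanW U x' z * `|Y e z - 1| <= eps.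
  apply: hits_dev_le => //; first by move=> i; rewrite inE => /eqP.
  apply: le_trans eps_ge.
  have -> : (L%:R * U (x' j) e)^-1 = q%:R / (q%:R * (L%:R * U (x' j) e)).
    by field; rewrite !lt0r_neq0 ?ltr0n.
  rewrite ler_pM2l ?ltr0n // lef_pV2 ?posrE ?mulr_gt0 ?ltr0n // mulrA -natrM.
  by apply: ler_pM => //; [exact: ltW | rewrite ler_nat].
apply: le_trans (_ : \sum_w \sum_(z | has_comp z w) chanW U x' z * `|Y c z - Y c' z| <= _).
  apply: ler_sum => w _.
  rewrite !(rest_comp_change_measure _ x'x) ?lt0r_neq0 // -sumrB.
  apply: le_trans (ler_norm_sum _ _ _) _; apply: ler_sum => z _.
  by rewrite -mulrBr normrM ger0_norm ?chanW_ge0.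
apply: le_trans (sum_comps_le _) _; first by move=> z; rewrite mulr_ge0 ?chanW_ge0.
apply: le_trans (lerD (Y_dev c) (Y_dev c')); rewrite -big_split /= ler_sum // => z _.
by rewrite -mulrDr ler_wpM2l ?chanW_ge0 // [`|Y c' z - 1|]distrC ler_distD.
Qed.

Lemma out_comp_upd_le x j b :
  \sum_w `|out_comp U x w - out_comp U (upd x j b) w| <= 4 * eps.
Proof.
apply: le_trans (_ : \sum_w \sum_c `|U (x j) c - U b c| *
    `|rest_comp U x j c w - rest_comp U x j (x j) w| <= _).
  apply: ler_sum => w _; rewrite out_comp_upd_diff //.
  by apply: le_trans (ler_norm_sum _ _ _) _; apply: ler_sum => c _; rewrite normrM.
rewrite exchange_big /=.
apply: le_trans (_ : \sum_c (U (x j) c + U b c) * (eps + eps) <= _).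
  apply: ler_sum => c _; rewrite -mulr_sumr; apply: ler_pM.
  - exact: normr_ge0.
  - exact: sumr_ge0.
  - by apply: le_trans (ler_normB _ _) _; rewrite !ger0_norm.
  - exact: rest_comp_shift_le.
by rewrite -mulr_suml big_split /= !U_row; lra.
Qed.

End OneSymbolChange.

Section CompositionChannel.
Variables (R : realType) (q n : nat) (U : 'M[R]_q).

Lemma dc_comp_dist (x x' : {ffun 'I_n -> 'I_q}) (s s' : Ncomp q n) :
  has_comp x s -> has_comp x' s' -> dc s s' = (comp_dist x x')%:R :> R.
Proof.
move=> /forallP xs /forallP x's; rewrite /dc.
have -> : \sum_c `|(compv s c)%:R - (compv s' c)%:R : R| = (comp_dist x x' + comp_dist x' x)%:R.
  rewrite natrD !natr_sum -big_split; apply: eq_bigr => c _ /=.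
  by rewrite -(eqP (xs c)) -(eqP (x's c)) normr_natB natrD.
by rewrite [comp_dist x' x]comp_dist_sym natrD; field.
Qed.

Lemma PNC_out_comp (x : {ffun 'I_n -> 'I_q}) s w :
  has_comp x s -> PNC U w s = out_comp U x w.
Proof.
rewrite /PNC /rep_of; case: pickP => [x' x's xs | no_rep]; last by rewrite no_rep.
apply: out_comp_permute => c.
by move/forallP: x's => /(_ c) /eqP ->; move/forallP: xs => /(_ c) /eqP ->.
Qed.

Variables dl eps : R.
Hypotheses (q_gt0 : (0 < q)%N) (U_row : forall a, \sum_b U a b = 1).
Hypotheses (dl_gt0 : 0 < dl) (U_ge_dl : forall a b, dl <= U a b) (eps_gt0 : 0 < eps).
Hypothesis eps_ge : q%:R / (n%:R * dl) <= eps ^+ 2.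

Lemma PNC_L1_le (s s' : Ncomp q n) :
  \sum_w `|PNC U w s - PNC U w s'| <= 4 * eps * dc s s'.
Proof.
have c0 : 'I_q := Ordinal q_gt0.
have [[x xs] [x' x's]] := (has_comp_exists c0 s, has_comp_exists c0 s').
under eq_bigr => w _ do rewrite (PNC_out_comp w xs) (PNC_out_comp w x's).
rewrite (dc_comp_dist xs x's); apply: out_comp_L1_le => y j b.
have U_ge0 a b' : 0 <= U a b' by apply: le_trans (U_ge_dl a b'); apply: ltW.
exact: (out_comp_upd_le U_ge0 U_row dl_gt0 U_ge_dl eps_gt0 eps_ge).
Qed.

End CompositionChannel.

Section OutputShift.
Variables (R : realType) (q n : nat) (U : 'M[R]_q) (k : nat).
Variables (t t' : 'I_k -> Ncomp q n) (p : 'I_k -> R) (Q1 Q2 : Ncomp q n -> R).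
Hypothesis Q2_def :
  forall s, Q2 s = Q1 s + \sum_(i < k) p i * ((t' i == s)%:R - (t i == s)%:R).

Lemma out_dist_diff w :
  out_dist U Q1 w - out_dist U Q2 w = \sum_i p i * (PNC U w (t i) - PNC U w (t' i)).
Proof.
rewrite /out_dist; under [X in _ - X]eq_bigr do rewrite Q2_def mulrDl.
rewrite big_split /= opprD addrA subrr add0r; under eq_bigr do rewrite mulr_suml.
rewrite exchange_big /= -sumrN; apply: eq_bigr => i _.
under eq_bigr do rewrite -mulrA mulrBl.
by rewrite -mulr_sumr sumrB !sum_indicator_mul; ring.
Qed.

Lemma dTV_out_dist_le (K : R) : (forall i, 0 <= p i) ->
  (forall s s' : Ncomp q n, \sum_w `|PNC U w s - PNC U w s'| <= K * dc s s') ->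
  dTV (out_dist U Q1) (out_dist U Q2) <= K / 2 * \sum_i p i * dc (t i) (t' i).
Proof.
move=> p_ge0 PNC_L1; rewrite /dTV [K / 2]mulrC -mulrA ler_pM2l ?invr_gt0 //.
apply: le_trans (_ : \sum_w \sum_i p i * `|PNC U w (t i) - PNC U w (t' i)| <= _).
  apply: ler_sum => w _; rewrite out_dist_diff; apply: le_trans (ler_norm_sum _ _ _) _.
  by apply: ler_sum => i _; rewrite normrM ger0_norm.
rewrite exchange_big mulr_sumr; apply: ler_sum => i _ /=.
by rewrite -mulr_sumr mulrCA ler_wpM2l.
Qed.

End OutputShift.

Theorem lemma5 (R : realType) (q : nat) (U : 'M[R]_q) :
  (2 <= q)%N -> row_stochastic_pos U ->
  exists C4 : R, exists N : nat, forall n : nat, (N <= n)%N ->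
    forall (k : nat) (t t' : 'I_k -> Ncomp q n) (p : 'I_k -> R)
           (Q1 Q2 : Ncomp q n -> R),
      (1 <= k)%N ->
      (forall i, 0 <= p i) ->
      is_dist Q1 -> is_dist Q2 ->
      (forall s : Ncomp q n,
         Q2 s = Q1 s + \sum_(i < k) p i * ((t' i == s)%:R - (t i == s)%:R)) ->
      dTV (out_dist U Q1) (out_dist U Q2)
        <= C4 * (log2 (n%:R : R)) `^ (((q%:R : R) - 2) / 2) / Num.sqrt (n%:R)
           * \sum_(i < k) p i * dc (t i) (t' i).
Proof.
move=> q_ge2 [U_gt0 U_row].
have [dl dl_gt0 U_ge_dl] := matrix_entry_lb U_gt0.
pose kap := 1 + q%:R / dl.
have kap_ge1 : 1 <= kap by rewrite lerDl divr_ge0 // ltW.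
exists (2 * kap), 2 => n n_ge2 k t t' p Q1 Q2 _ p_ge0 _ _ Q2_def.
have n_gt0 : 0 < (n%:R : R) by rewrite ltr0n (leq_trans _ n_ge2).
have sqrt_n_gt0 : 0 < Num.sqrt (n%:R : R) by rewrite sqrtr_gt0.
pose eps := kap / Num.sqrt (n%:R : R).
have eps_gt0 : 0 < eps by rewrite divr_gt0 // (lt_le_trans ltr01).
have eps_ge : q%:R / (n%:R * dl) <= eps ^+ 2.
  have -> : q%:R / (n%:R * dl) = q%:R / dl / n%:R by field; rewrite !lt0r_neq0.
  rewrite /eps expr_div_n (sqr_sqrtr (ltW n_gt0)) ler_pM2r ?invr_gt0 //.
  rewrite (@le_trans _ _ kap) ?lerDr //.
  by rewrite expr2 ler_peMl // (le_trans ler01).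
have PNC_L1 := PNC_L1_le (ltnW q_ge2) U_row dl_gt0 U_ge_dl eps_gt0 eps_ge.
apply: le_trans (dTV_out_dist_le Q2_def p_ge0 PNC_L1) _.
apply: ler_wpM2r; first by apply: sumr_ge0 => i _; rewrite mulr_ge0 ?mulr_ge0 ?invr_ge0 ?sumr_ge0.
have log_ge1 : 1 <= log2 (n%:R : R) `^ (((q%:R : R) - 2) / 2).
  by rewrite log2_powR_ge1 // divr_ge0 // subr_ge0 ler_nat.
have -> : 4 * eps / 2 = 2 * kap / Num.sqrt (n%:R : R) * 1 by rewrite /eps; field; rewrite lt0r_neq0.
rewrite [leRHS]mulrAC; apply: ler_wpM2l => //.
by rewrite divr_ge0 ?mulr_ge0 ?sqrtr_ge0 // (le_trans ler01).
Qed.
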